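(* For any finite set of $\mathrm{B}'$-rules, the calculus $\mathbf{L}^*(/)$ extended with these $\mathrm{B}'$-rules admits cut elimination: every sequent derivable in it (using cut) is derivable without using the cut rule.
   Context: $\mathbf{L}^*(/)$ is the one-division Lambek calculus: formulae are built from variables using only $/$; sequents are $\Pi\to A$ with $\Pi$ a finite (possibly empty) sequence of formulae; axioms $A\to A$; rules ($/L$) from $\Pi\to A$ and $\Delta_1,B,\Delta_2\to C$ infer $\Delta_1,B/A,\Pi,\Delta_2\to C$; ($/R$) from $\Pi,A\to B$ infer $\Pi\to B/A$; (cut) from $\Pi\to A$ and $\Delta_1,A,\Delta_2\to C$ infer $\Delta_1,\Pi,\Delta_2\to C$. For a tuple $(q_1,\dots,q_m,r;p_1,\dots,p_k,t)$ of concrete variables, the corresponding $\mathrm{B}'$-rule is: from $\Pi_1\to p_1$, ..., $\Pi_k\to p_k$ and $\Delta,q_1,\dots,q_m\to r$ infer $\Pi_1,\dots,\Pi_k,\Delta\to t$, for arbitrary sequences of formulae $\Pi_1,\dots,\Pi_k,\Delta$. *)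

From Stdlib Require Import List.
Import ListNotations.

(* Formulae built from variables (indexed by nat) using only "/".
   [Div B A] is the formula B / A. *)
Inductive formula : Type :=
| Var : nat -> formula
| Div : formula -> formula -> formula.

Record brule : Type := mkBrule {
  br_qs : list nat;
  br_r  : nat;
  br_ps : list nat;
  br_t  : nat
}.

(* Antecedents may be empty (as in L-star). *)
Inductive deriv (rules : list brule) (withcut : bool)
  : list formula -> formula -> Prop :=
| d_ax : forall A, deriv rules withcut [A] A
| d_divL : forall Pi Delta1 Delta2 A B C,
    deriv rules withcut Pi A ->
    deriv rules withcut (Delta1 ++ B :: Delta2) C ->
    deriv rules withcut (Delta1 ++ Div B A :: Pi ++ Delta2) C
| d_divR : forall Pi A B,
    deriv rules withcut (Pi ++ [A]) B ->
    deriv rules withcut Pi (Div B A)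
| d_cut : forall Pi Delta1 Delta2 A C,
    withcut = true ->
    deriv rules withcut Pi A ->
    deriv rules withcut (Delta1 ++ A :: Delta2) C ->
    deriv rules withcut (Delta1 ++ Pi ++ Delta2) C
| d_brule : forall rho (Pis : list (list formula)) Delta,
    In rho rules ->
    length Pis = length (br_ps rho) ->
    (forall i, i < length (br_ps rho) ->
       deriv rules withcut (nth i Pis []) (Var (nth i (br_ps rho) 0))) ->
    deriv rules withcut (Delta ++ map Var (br_qs rho)) (Var (br_r rho)) ->
    deriv rules withcut (concat Pis ++ Delta) (Var (br_t rho)).

(* Cut is admissible, by induction on the cut formula A and then on the
   cut-free derivation in which an occurrence of A is replaced by Pi.  The
   antecedent of a B'-rule conclusion consists of side formulae only, so A is
   never principal there and the substitution simply passes into a premise.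
   The only principal case is A = B / A' introduced by (/L); it reduces to
   cuts on A' and B because (/R) is invertible in the cut-free calculus,
   B'-rules concluding only variables. *)
From Stdlib Require Import List Arith Lia.
Import ListNotations.

Lemma app_cons_eq_app_cons {T} (l1 l2 D1 D2 : list T) x a :
  l1 ++ x :: l2 = D1 ++ a :: D2 ->
  (exists M, l1 = D1 ++ a :: M /\ D2 = M ++ x :: l2) \/
  (D1 = l1 /\ a = x /\ D2 = l2) \/
  (exists M, D1 = l1 ++ x :: M /\ l2 = M ++ a :: D2).
Proof.
  intros H.
  destruct (app_eq_app _ _ _ _ H) as [[|y M] [[-> E] | [-> E]]];
    rewrite ?app_nil_r in *; simpl in E; injection E as -> ->; auto.
  - left; exists M; auto.
  - right; right; exists M; auto.
Qed.

Lemma app_cons_eq_app {T} (M D2 P Q : list T) a :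
  M ++ a :: D2 = P ++ Q ->
  (exists Y, P = M ++ a :: Y /\ D2 = Y ++ Q) \/
  (exists Y, Q = Y ++ a :: D2 /\ M = P ++ Y).
Proof.
  intros H. destruct (app_eq_app _ _ _ _ H) as [[|y Y] [[-> ->] | [-> E]]].
  - right; exists []; auto.
  - right; exists []; simpl in E; subst; rewrite !app_nil_r; auto.
  - right; exists (y :: Y); auto.
  - injection E as -> ->. left; exists Y; auto.
Qed.

Lemma concat_eq_app_cons {T} (Pis : list (list T)) D1 a E :
  concat Pis = D1 ++ a :: E ->
  exists L1 X1 X2 L2, Pis = L1 ++ (X1 ++ a :: X2) :: L2 /\
    D1 = concat L1 ++ X1 /\ E = X2 ++ concat L2.
Proof.
  revert D1; induction Pis as [|P Ps IH]; intros D1 H; simpl in H.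
  - destruct D1; discriminate.
  - destruct (app_cons_eq_app _ _ _ _ _ (eq_sym H)) as [(Y & -> & ->) | (Y & HY & ->)].
    + exists [], D1, Y, Ps; auto.
    + destruct (IH Y HY) as (L1 & X1 & X2 & L2 & -> & -> & ->).
      exists (P :: L1), X1, X2, L2; simpl; rewrite app_assoc; auto.
Qed.

Lemma nth_app_cons_other {T} (L1 L2 : list T) Y Z d i :
  i <> length L1 -> nth i (L1 ++ Y :: L2) d = nth i (L1 ++ Z :: L2) d.
Proof.
  revert i; induction L1 as [|x L1 IH]; intros [|i] Hi; simpl in *; auto; lia.
Qed.

Section CutFree.

Variable rules : list brule.

Local Notation cutfree := (deriv rules false).

Lemma cutfree_brule_replace rho L1 X L2 X' Delta :
  In rho rules ->
  length (L1 ++ X :: L2) = length (br_ps rho) ->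
  (forall i, i < length (br_ps rho) ->
     cutfree (nth i (L1 ++ X :: L2) []) (Var (nth i (br_ps rho) 0))) ->
  cutfree X' (Var (nth (length L1) (br_ps rho) 0)) ->
  cutfree (Delta ++ map Var (br_qs rho)) (Var (br_r rho)) ->
  cutfree (concat (L1 ++ X' :: L2) ++ Delta) (Var (br_t rho)).
Proof.
  intros Hin Hlen Hps HX' Hq. apply d_brule; auto.
  - rewrite length_app in *; auto.
  - intros i Hi. destruct (Nat.eq_dec i (length L1)) as [->|Hne].
    + rewrite nth_middle; auto.
    + rewrite (nth_app_cons_other _ _ _ X); auto.
Qed.

Lemma cutfree_divR_inv G B A :
  cutfree G (Div B A) -> cutfree (G ++ [A]) B.
Proof.
  remember (Div B A) as C eqn:HC. intros H. revert B A HC.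
  induction H; intros B' A' HC; try discriminate.
  - subst. apply (d_divL rules false [A'] [] [] A' B' B'); constructor.
  - subst. rewrite <- !app_assoc. simpl. rewrite <- app_assoc.
    apply d_divL; auto. rewrite app_comm_cons, app_assoc. auto.
  - injection HC as -> ->; auto.
Qed.

Definition cut_admissible_for (Pi : list formula) (A : formula) : Prop :=
  forall D1 D2 C, cutfree (D1 ++ A :: D2) C -> cutfree (D1 ++ Pi ++ D2) C.

Definition principal_cut_admissible_for (Pi : list formula) (A : formula) : Prop :=
  forall B A' Pi' D1 D2 C, A = Div B A' -> cutfree Pi' A' ->
    cutfree (D1 ++ B :: D2) C -> cutfree (D1 ++ Pi ++ Pi' ++ D2) C.

Lemma cut_admissible_of_principal Pi A :
  cutfree Pi A -> principal_cut_admissible_for Pi A -> cut_admissible_for Pi A.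
Proof.
  intros HPi Hprin D1 D2 C HG. remember (D1 ++ A :: D2) as G eqn:HE.
  revert D1 D2 HE.
  induction HG as [A1|Pi0 Delta1 Delta2 A0 B0 C0 H1 IH1 H2 IH2|Pi0 A0 B0 H IH
    |Pi0 Delta1 Delta2 A0 C0 Hf|rho Pis Delta Hin Hlen Hps IHps Hq IHq];
    intros D1 D2 HE.
  - destruct D1 as [|d [|]]; simpl in HE; injection HE as; subst; try discriminate.
    simpl; rewrite app_nil_r; auto.
  - destruct (app_cons_eq_app_cons _ _ _ _ _ _ HE)
      as [(M & -> & ->) | [(-> & -> & ->) | (M & -> & HM)]].
    +       rewrite (app_assoc D1), (app_assoc _ M).
      apply d_divL; auto. rewrite <- !app_assoc. apply IH2. now rewrite <- app_assoc.
    + eapply Hprin; eauto.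
    + destruct (app_cons_eq_app _ _ _ _ _ (eq_sym HM)) as [(Y & -> & ->) | (Y & -> & ->)].
      *         rewrite <- app_assoc; simpl. rewrite (app_assoc M), (app_assoc _ Y).
        apply d_divL; auto. rewrite <- app_assoc; auto.
      * rewrite <- !app_assoc. simpl. rewrite <- app_assoc.
        apply d_divL; auto. rewrite app_comm_cons, app_assoc. apply IH2.
        now rewrite <- app_assoc.
  - subst. apply d_divR. rewrite <- !app_assoc. apply IH. now rewrite <- app_assoc.
  - discriminate.
  - destruct (app_cons_eq_app _ _ _ _ _ (eq_sym HE)) as [(Y & HY & ->) | (Y & -> & ->)].
    + destruct (concat_eq_app_cons _ _ _ _ HY) as (L1 & X1 & X2 & L2 & -> & -> & ->).
      replace ((concat L1 ++ X1) ++ Pi ++ (X2 ++ concat L2) ++ Delta) with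
        (concat (L1 ++ (X1 ++ Pi ++ X2) :: L2) ++ Delta)
        by (rewrite concat_app; simpl; now rewrite <- !app_assoc).
      apply (cutfree_brule_replace _ _ (X1 ++ A :: X2)); auto.
      assert (HL1 : length L1 < length (br_ps rho))
        by (rewrite <- Hlen, length_app; simpl; lia).
      apply IHps; auto. now rewrite nth_middle.
    + rewrite <- app_assoc. apply d_brule; auto.
      rewrite <- !app_assoc. apply IHq. now rewrite <- app_assoc.
Qed.

Lemma cut_admissible A : forall Pi, cutfree Pi A -> cut_admissible_for Pi A.
Proof.
  induction A as [n|B IHB A IHA]; intros Pi HPi; apply cut_admissible_of_principal; auto.
  - intros ? ? ? ? ? ? HE; discriminate.
  - intros B' A' Pi' D1 D2 C HE HPi' HB. injection HE as <- <-.
    assert (HPiA : cutfree (Pi ++ Pi') B).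
    { pose proof (IHA _ HPi' Pi [] B (cutfree_divR_inv _ _ _ HPi)) as H.
      now rewrite app_nil_r in H. }
    rewrite (app_assoc Pi). apply (IHB _ HPiA _ _ _ HB).
Qed.

End CutFree.

Theorem lemma4 (rules : list brule) (Pi : list formula) (A : formula) :
  deriv rules true Pi A -> deriv rules false Pi A.
Proof.
  induction 1.
  - constructor.
  - apply d_divL; auto.
  - apply d_divR; auto.
  - apply cut_admissible with A; auto.
  - apply d_brule; auto.
Qed.
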